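(* Assume the channel growth condition and the asymptotic quadratic-Lipschitz condition for every $\mathcal G^{(\ell)}$, $\ell=1,\dots,L$, and let $(\mathbf K^{(2,n)},\dots,\mathbf K^{(L+1,n)})$ come from the general covariance Markov chain. Then for every $\epsilon>0$ there exist compact sets $S_2\subset\mathcal S^+_{D_2},\dots,S_{L+1}\subset\mathcal S^+_{D_{L+1}}$ such that $$\limsup_{n\to\infty}\frac1n\log\mathbb P\big((\mathbf K^{(2,n)},\dots,\mathbf K^{(L+1,n)})\notin S_2\times\dots\times S_{L+1}\big)\le-\epsilon.$$
   Context: $\mathcal S^+_D$ denotes the symmetric positive semidefinite $D\times D$ real matrices, $\sqrt Q$ the positive semidefinite square root, $\|\cdot\|_2$ the Euclidean norm and $\|\cdot\|_F$ the Frobenius norm. General covariance Markov chain: fix $L\ge1$, positive integers $D_1,\dots,D_{L+1}$, measurable maps $\mathcal G^{(\ell)}:\mathbb R^{D_\ell}\to\mathcal S^+_{D_{\ell+1}}$ ($\ell=1,\dots,L$), a deterministic $\mathbf K^{(1)}\in\mathcal S^+_{D_1}$ and positive integers $C_\ell(n)$. For each $n\ge1$, $(\mathbf K^{(1,n)},\dots,\mathbf K^{(L+1,n)})$ is a Markov chain with $\mathbf K^{(1,n)}=\mathbf K^{(1)}$ and, for $\ell=1,\dots,L$, $\mathbb P\{\mathbf K^{(\ell+1,n)}\in B\mid\mathbf K^{(\ell,n)}=Q\}=\nu_{\ell+1,n}(B\mid Q):=\mathbb P\{\frac1{C_\ell(n)}\sum_{c=1}^{C_\ell(n)}\mathcal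 G^{(\ell)}(\sqrt QZ^{(\ell)}_c)\in B\}$ for Borel $B\subseteq\mathcal S^+_{D_{\ell+1}}$, $Q\in\mathcal S^+_{D_\ell}$, where $Z^{(\ell)}_c$, $c\ge1$, are i.i.d. $\mathcal N(\mathbf 0,\mathbf I_{D_\ell})$. Channel growth condition: $C_\ell(n)/n\to\alpha_\ell\in(0,\infty)$ for $\ell=1,\dots,L$. Asymptotic quadratic-Lipschitz condition: $\mathcal G^{(\ell)}$ is continuous and for every $\varepsilon>0$ there is $C_\varepsilon>0$ with $\|\mathcal G^{(\ell)}(z)-\mathcal G^{(\ell)}(z')\|_F\le C_\varepsilon[1+\|z-z'\|_2(\|z\|_2+\|z'\|_2)]+\varepsilon(\|z\|_2^2+\|z'\|_2^2)$ for all $z,z'$. *)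

From HB Require Import structures.
From mathcomp Require Import all_boot all_order all_algebra.
From mathcomp Require Import all_classical all_reals all_analysis.
Set Implicit Arguments.
Unset Strict Implicit.
Unset Printing Implicit Defensive.
Import Order.TTheory GRing.Theory Num.Theory.
Import numFieldTopology.Exports numFieldNormedType.Exports.
Local Open Scope classical_set_scope.
Local Open Scope ring_scope.

Section Defs.
Variable R : realType.

Definition sym_psd (D : nat) (Q : 'M[R]_D) : Prop :=
  Q^T = Q /\ forall v : 'cV[R]_D, 0 <= (v^T *m Q *m v) 0 0.

(* the positive semidefinite square root of Q (the unique symmetric psd M
   with M * M = Q; 0 if Q is not psd, a case that never arises below) *)
Definition psd_sqrt (D : nat) (Q : 'M[R]_D) : 'M[R]_D :=
  xget 0 [set M : 'M[R]_D | sym_psd M /\ M *m M = Q].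

Definition norm2 (D : nat) (z : 'cV[R]_D) : R :=
  Num.sqrt (\sum_(i < D) z i 0 ^+ 2).
Definition normF (m n : nat) (A : 'M[R]_(m, n)) : R :=
  Num.sqrt (\sum_(i < m) \sum_(j < n) A i j ^+ 2).

(* gauss_int N f = E[ f(Z) ] where Z = (Z_0, Z_1, ...) and Z_0,...,Z_{N-1}
   are i.i.d. N(0,1) (f is only meant to depend on the first N coordinates);
   computed as an iterated (Tonelli) integral against the N(0,1) law. *)
Fixpoint gauss_int (N : nat) (f : (nat -> R) -> \bar R) : \bar R :=
  match N with
  | 0 => f (fun _ => 0)
  | N'.+1 => (\int[normal_prob (0:R) 1]_x
               gauss_int N' (fun w => f (fun i => if i is i'.+1 then w i' else x)))%E
  end.

(* one step of the chain: given Q and the Gaussian coordinates w, where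
   Z_c = (w (c*D + i))_{i<D} for c < C, returns (1/C) sum_c G(sqrt(Q) Z_c) *)
Definition layer_map (D D' : nat) (G : 'cV[R]_D -> 'M[R]_D') (C : nat)
  (Q : 'M[R]_D) (w : nat -> R) : 'M[R]_D' :=
  (C%:R)^-1 *: \sum_(c < C) G (psd_sqrt Q *m \col_(i < D) w (c * D + i)%N).

(* prob_in Dim G C S k l Q = P( K^(l+1) in S (l+1), ..., K^(l+k) in S (l+k)
   | K^(l) = Q ) for the covariance Markov chain with transition kernels
   nu_{j+1}(. | Q) = law of (1/C j) sum_{c <= C j} G j (sqrt Q Z_c). *)
Fixpoint prob_in (Dim : nat -> nat)
  (G : forall l, 'cV[R]_(Dim l) -> 'M[R]_(Dim l.+1)) (C : nat -> nat)
  (S : forall l, set 'M[R]_(Dim l)) (k l : nat) (Q : 'M[R]_(Dim l)) : \bar R :=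
  match k with
  | 0 => 1%E
  | k'.+1 =>
      gauss_int (C l * Dim l)
        (fun w => let Q' := layer_map (G l) (C l) Q w in
                  ((\1_(S l.+1) Q')%:E * prob_in G C S k' Q')%E)
  end.

(* P( (K^(2,n),...,K^(L+1,n)) \notin S_2 x ... x S_{L+1} ) for the chain
   started at K^(1,n) = K1, with channel numbers C_l(n) = Cn l n. *)
Definition chain_exit_prob (Dim : nat -> nat)
  (G : forall l, 'cV[R]_(Dim l) -> 'M[R]_(Dim l.+1)) (Cn : nat -> nat -> nat)
  (L : nat) (K1 : 'M[R]_(Dim 1%N)) (S : forall l, set 'M[R]_(Dim l)) (n : nat)
  : \bar R :=
  (1 - prob_in G (fun l => Cn l n) S L K1)%E.

End Defs.

From HB Require Import structures.
From mathcomp Require Import all_boot all_order all_algebra.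
From mathcomp Require Import all_classical all_reals all_analysis.
From mathcomp Require Import measurable_realfun.
From mathcomp Require Import ring lra zify.
Import Order.TTheory GRing.Theory Num.Theory.
Import numFieldTopology.Exports numFieldNormedType.Exports.
Local Open Scope classical_set_scope.
Local Open Scope ring_scope.
Set Implicit Arguments.
Unset Strict Implicit.
Unset Printing Implicit Defensive.

(* Since E[exp(3/8 Z^2)] = 2 for Z ~ N(0,1), Markov's inequality bounds the
   probability that the N = C_l(n) D_l Gaussian coordinates feeding layer l have
   squared norm above t N by 2^N exp(-3/8 t N).  On the complementary event the
   quadratic growth |G z| <= K + B |z|^2, which the quadratic-Lipschitz condition
   implies, turns an entrywise bound M on K^(l) into the entrywise bound
   K + B (M D_l) (t D_l) on K^(l+1).  Hence the chain stays in boxes of PSD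
   matrices with deterministic radii, which are compact, except with probability
   at most sum_l 2^(N_l) exp(-3/8 t_l N_l).  As N_l >= alpha_l n / 2 for large n,
   choosing t_l of order (eps + 1) / alpha_l makes this O(exp(-(eps + 1) n)). *)

Section GaussianChernoff.
Variable R : realType.

Definition chernoff_weight (x : R) : R := expR (3 / 8 * x ^+ 2).

(* The Chernoff bound for P(Z_0^2 + ... + Z_(N-1)^2 > t N), Z_k i.i.d. N(0,1). *)
Definition gauss_sqnorm_tail (t : R) (N : nat) : R :=
  expR (- (3 / 8) * (t * N%:R)) * 2 ^+ N.

Lemma gauss_sqnorm_tail_ge0 t N : 0 <= gauss_sqnorm_tail t N.
Proof. by rewrite mulr_ge0 ?expR_ge0 ?exprn_ge0. Qed.

Lemma chernoff_weight_ge0 x : 0 <= chernoff_weight x.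
Proof. exact: expR_ge0. Qed.

Lemma measurable_chernoff_weight : measurable_fun setT chernoff_weight.
Proof. by apply: measurableT_comp => //; apply: measurable_funM. Qed.

(* The exponent 3/8 is chosen so that the weighted N(0,1) density is twice
   the N(0,2) density, i.e. E[exp(3/8 Z^2)] = 2. *)
Lemma chernoff_weight_normal_pdf x :
  chernoff_weight x * normal_pdf 0 1 x = 2 * normal_pdf 0 2 x.
Proof.
rewrite /normal_pdf oner_eq0 pnatr_eq0 /= /normal_peak /normal_fun.
have -> : Num.sqrt (2 ^+ 2 * pi *+ 2) = 2 * Num.sqrt (1 ^+ 2 * (pi : R) *+ 2).
  by rewrite expr1n mul1r -mulrnAr sqrtrM ?sqr_ge0 // sqrtr_sqr ger0_norm.
have <- : chernoff_weight x * expR (- (x - 0) ^+ 2 / (1 ^+ 2 *+ 2)) =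
          expR (- (x - 0) ^+ 2 / (2 ^+ 2 *+ 2)).
  by rewrite -expRD; congr expR; rewrite subr0 !mulr2n expr1n; field.
have : Num.sqrt (1 ^+ 2 * (pi : R) *+ 2) != 0.
  by rewrite gt_eqF // sqrtr_gt0 expr1n mul1r mulrn_wgt0 // pi_gt0.
by move=> ?; rewrite invfM; field.
Qed.

Local Open Scope ereal_scope.

Lemma le_integral_pointwise d (T : measurableType d) (mu : measure T R)
    (f g : T -> \bar R) :
  (forall x, f x <= g x) -> \int[mu]_x f x <= \int[mu]_x g x.
Proof.
move=> fg; rewrite /integral !patch_setT.
apply: leeB; apply: ereal_sup_le => _ [h hle <-]; exists h => //= x.
- apply: le_trans (hle x) _.
  by apply: (@funepos_le _ _ setT) => [y _|]; [exact: fg | exact: in_setT].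
- apply: le_trans (hle x) _.
  by apply: (@funeneg_le _ _ setT) => [y _|]; [exact: fg | exact: in_setT].
Qed.

Lemma ge0_integral_normal_prob (m s : R) (f : R -> \bar R) :
  (forall x, 0 <= f x) -> measurable_fun setT f ->
  \int[normal_prob m s]_x f x =
  \int[lebesgue_measure]_x (f x * (normal_pdf m s x)%:E).
Proof.
move=> f0 mf.
have dom := normal_prob_dominates m s.
rewrite -(Radon_Nikodym_SigmaFinite.change_of_variables dom) //.
have iRN := Radon_Nikodym_SigmaFinite.f_integrable dom.
have mRN := measurable_int _ iRN.
have mpdf : measurable_fun setT (EFin \o normal_pdf m s).
  by apply/measurable_EFinP; exact: measurable_normal_pdf.
apply: ae_eq_integral => //; try exact: emeasurable_funM.
apply: ae_eqe_mul2l; apply: integral_ae_eq => // E _ mE.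
by rewrite -Radon_Nikodym_SigmaFinite.f_integral.
Qed.

Lemma integral_normal_chernoff_weight :
  \int[normal_prob 0 1]_x (chernoff_weight x)%:E = 2%:E.
Proof.
rewrite ge0_integral_normal_prob; last first.
- by apply/measurable_EFinP; exact: measurable_chernoff_weight.
- by move=> x; rewrite lee_fin chernoff_weight_ge0.
under eq_integral do rewrite -EFinM chernoff_weight_normal_pdf EFinM.
rewrite integralZl //=; last exact: integrable_normal_pdf.
by rewrite integral_normal_pdf mule1.
Qed.

Lemma integrable_chernoff_weight :
  (normal_prob 0 1).-integrable setT (EFin \o chernoff_weight).
Proof.
apply/integrableP; split.
  by apply/measurable_EFinP; exact: measurable_chernoff_weight.
under eq_integral do rewrite /= ger0_norm ?chernoff_weight_ge0 //.
by rewrite integral_normal_chernoff_weight ltry.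
Qed.

Lemma integral_normal_affine_chernoff_weight (a b : R) :
  \int[normal_prob 0 1]_x (a - b * chernoff_weight x)%:E = (a - b * 2)%:E.
Proof.
have ib := integrableZl measurableT b integrable_chernoff_weight.
under eq_integral do rewrite EFinB.
rewrite integralB_EFin //; last exact: (finite_measure_integrable_cst _ a measurableT).
rewrite integral_cst // [X in a%:E * X](_ : _ = 1) ?mule1; last exact: probability_setT.
under eq_integral do rewrite EFinM.
rewrite integralZl //; last exact: integrable_chernoff_weight.
by rewrite integral_normal_chernoff_weight -EFinM.
Qed.

Lemma le_gauss_int N (f g : (nat -> R) -> \bar R) :
  (forall w, f w <= g w) -> gauss_int N f <= gauss_int N g.
Proof.
elim: N f g => [|N IH] f g fg //=.
by apply: le_integral_pointwise => x; apply: IH.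
Qed.

Lemma gauss_int_ge0 N (f : (nat -> R) -> \bar R) :
  (forall w, 0 <= f w) -> 0 <= gauss_int N f.
Proof.
elim: N f => [|N IH] f f0 //=.
by apply: integral_ge0 => x _; apply: IH.
Qed.

Lemma gauss_int_affine_prod N (a c : R) :
  gauss_int N (fun w => (a - c * \prod_(k < N) chernoff_weight (w k))%:E) =
  (a - c * 2 ^+ N)%:E.
Proof.
elim: N a c => [|N IH] a c /=; first by rewrite big_ord0 expr0.
transitivity (\int[normal_prob 0 1]_x (a - c * 2 ^+ N * chernoff_weight x)%:E).
  apply: eq_integral => x _.
  have -> : (a - c * 2 ^+ N * chernoff_weight x = a - c * chernoff_weight x * 2 ^+ N)%R.
    by ring.
  rewrite -IH; congr gauss_int; apply: funext => w.
  by rewrite big_ord_recl /= mulrA.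
by rewrite integral_normal_affine_chernoff_weight exprS; congr (_ - _)%:E; ring.
Qed.

(* Markov's inequality for prod_k exp(3/8 Z_k^2), whose expectation is 2^N. *)
Lemma gauss_int_chernoff N (f : (nat -> R) -> \bar R) (a t : R) :
  (a <= 1)%R -> (forall w, 0 <= f w) ->
  (forall w : nat -> R, (\sum_(k < N) w k ^+ 2 <= t * N%:R)%R -> a%:E <= f w) ->
  (a - gauss_sqnorm_tail t N)%:E <= gauss_int N f.
Proof.
move=> a1 f0 fa; set c := expR (- (3 / 8) * (t * N%:R)).
rewrite /gauss_sqnorm_tail -/c -gauss_int_affine_prod; apply: le_gauss_int => w.
have Pge0 : (0 <= c * \prod_(k < N) chernoff_weight (w k))%R.
  by rewrite mulr_ge0 ?expR_ge0 // prodr_ge0 // => k _; exact: chernoff_weight_ge0.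
have [small|large] := leP (\sum_(k < N) w k ^+ 2)%R (t * N%:R)%R.
  by apply: le_trans (fa w small); rewrite lee_fin gerBl.
apply: le_trans (f0 w); rewrite lee_fin subr_le0 (le_trans a1) //.
rewrite /c /chernoff_weight -expR_sum -expRD -mulr_sumr.
by apply/ltW; rewrite expR_gt1; lra.
Qed.

End GaussianChernoff.

Section PsdBox.
Variable R : realType.

Definition sqnorm2 D (z : 'cV[R]_D) : R := \sum_(i < D) z i 0 ^+ 2.

Definition psd_box D (M : R) : set 'M[R]_D :=
  [set Q | sym_psd Q /\ forall i j, `|Q i j| <= M].

Lemma sqnorm2_ge0 D (z : 'cV[R]_D) : 0 <= sqnorm2 z.
Proof. by apply: sumr_ge0 => i _; exact: sqr_ge0. Qed.

Lemma norm2_sqr D (z : 'cV[R]_D) : norm2 z ^+ 2 = sqnorm2 z.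
Proof. by rewrite sqr_sqrtr // sqnorm2_ge0. Qed.

Lemma norm2_0 D : norm2 (0 : 'cV[R]_D) = 0.
Proof. by rewrite /norm2 big1 ?sqrtr0 // => i _; rewrite mxE expr0n. Qed.

Lemma entry_le_normF m n (A : 'M[R]_(m, n)) i j : `|A i j| <= normF A.
Proof.
rewrite /normF -sqrtr_sqr; apply: ler_wsqrtr.
rewrite (bigD1 i) //= (bigD1 j) //= -addrA lerDl.
by apply: addr_ge0; do ?[apply: sumr_ge0 => ? _]; exact: sqr_ge0.
Qed.

Lemma sym_psd0 D : sym_psd (0 : 'M[R]_D).
Proof. by split=> [|v]; rewrite ?trmx0 // mulmx0 mul0mx mxE. Qed.

Lemma sym_psdD D (A B : 'M[R]_D) : sym_psd A -> sym_psd B -> sym_psd (A + B).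
Proof.
move=> [tA qA] [tB qB]; split; first by rewrite linearD /= tA tB.
by move=> v; rewrite mulmxDr mulmxDl mxE addr_ge0.
Qed.

Lemma sym_psdZ D a (A : 'M[R]_D) : 0 <= a -> sym_psd A -> sym_psd (a *: A).
Proof.
move=> a0 [tA qA]; split; first by rewrite linearZ /= tA.
by move=> v; rewrite -scalemxAr -scalemxAl mxE mulr_ge0.
Qed.

Lemma entry_bound_mul_dim_ge0 D (Q : 'M[R]_D) M :
  (forall i j, `|Q i j| <= M) -> 0 <= M * D%:R.
Proof.
move=> QM; have [->|D_gt0] := posnP D; first by rewrite mulr0.
by rewrite mulr_ge0 // (le_trans (normr_ge0 _) (QM (Ordinal D_gt0) (Ordinal D_gt0))).
Qed.

Lemma mx_quadform_expand D (Q : 'M[R]_D) (v : 'cV[R]_D) :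
  (v^T *m Q *m v) 0 0 = \sum_(k < D) \sum_(j < D) (v j 0 * v k 0) * Q j k.
Proof.
rewrite mxE; apply: eq_bigr => k _; rewrite mxE big_distrl /=.
by apply: eq_bigr => j _; rewrite mxE; ring.
Qed.

Lemma mx_quadform_le D (Q : 'M[R]_D) M (z : 'cV[R]_D) :
  (forall i j, `|Q i j| <= M) -> (z^T *m Q *m z) 0 0 <= M * D%:R * sqnorm2 z.
Proof.
case: D Q z => [|D] Q z QM; first by rewrite mx_quadform_expand !big_ord0 mulr0 mul0r.
have M0 : 0 <= M := le_trans (normr_ge0 _) (QM ord0 ord0).
rewrite mx_quadform_expand.
apply: (@le_trans _ _
    (\sum_(k < D.+1) \sum_(j < D.+1) M / 2 * (z j 0 ^+ 2 + z k 0 ^+ 2))).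
  apply: ler_sum => k _; apply: ler_sum => j _.
  apply: le_trans (ler_norm _) _; rewrite !normrM.
  apply: le_trans (_ : `|z j 0| * `|z k 0| * M <= _).
    by rewrite ler_wpM2l ?mulr_ge0.
  rewrite -(real_normK (num_real (z j 0))) -(real_normK (num_real (z k 0))).
  have := mulr_ge0 M0 (sqr_ge0 (`|z j 0| - `|z k 0|)); nra.
have inner k : \sum_(j < D.+1) M / 2 * (z j 0 ^+ 2 + z k 0 ^+ 2) =
    M / 2 * (sqnorm2 z + D.+1%:R * z k 0 ^+ 2).
  by rewrite -mulr_sumr big_split /= sumr_const card_ord mulr_natl.
under eq_bigr do rewrite inner.
rewrite -mulr_sumr big_split /= -mulr_sumr sumr_const card_ord -/(sqnorm2 z).
by rewrite -mulr_natr le_eqVlt; apply/orP; left; apply/eqP; field.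
Qed.

Lemma sqnorm2_psd_sqrt_mul_le D (Q : 'M[R]_D) M (z : 'cV[R]_D) :
  (forall i j, `|Q i j| <= M) -> sqnorm2 (psd_sqrt Q *m z) <= M * D%:R * sqnorm2 z.
Proof.
move=> QM; rewrite /psd_sqrt; case: xgetP => [A _ [[tA _] AA] | _]; last first.
  rewrite mul0mx /sqnorm2 big1 => [|i _]; last by rewrite mxE expr0n.
  by rewrite mulr_ge0 ?sqnorm2_ge0 ?(entry_bound_mul_dim_ge0 QM).
have -> : sqnorm2 (A *m z) = ((A *m z)^T *m (A *m z)) 0 0.
  by rewrite /sqnorm2 [RHS]mxE; apply: eq_bigr => i _; rewrite expr2 !mxE.
by rewrite trmx_mul tA mulmxA -(mulmxA z^T) AA; exact: mx_quadform_le.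
Qed.

Lemma closed_le_continuous (T : topologicalType) (f g : T -> R) :
  continuous f -> continuous g -> closed [set x | f x <= g x].
Proof.
move=> fc gc; have -> : [set x | f x <= g x] = (g \- f) @^-1` [set y | 0 <= y].
  by apply/funext => x /=; rewrite subr_ge0.
have cgf : continuous (g \- f) by move=> x; apply: continuousB; [exact: gc | exact: fc].
apply: preimage_closed; last exact: closed_ge.
by move=> x _; exact: cgf.
Qed.

Lemma closed_forall (T : topologicalType) (I : Type) (A : I -> set T) :
  (forall i, closed (A i)) -> closed [set x | forall i, A i x].
Proof.
move=> cA; rewrite (_ : [set x | _] = \bigcap_(i in setT) A i).
  exact: closed_bigI.
by apply/seteqP; split=> x /= Ax i //; exact: Ax.
Qed.

Lemma continuous_sum (T : topologicalType) (I : Type) (r : seq I) (F : I -> T -> R) :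
  (forall i, continuous (F i)) -> continuous (fun x => \sum_(i <- r) F i x).
Proof.
move=> Fc; elim: r => [|a r IH].
  by under eq_fun do rewrite big_nil; exact: cst_continuous.
under eq_fun do rewrite big_cons.
by move=> x; apply: continuousD; [exact: Fc | exact: IH].
Qed.

Lemma continuous_mx_quadform D (v : 'cV[R]_D) :
  continuous (fun Q : 'M[R]_D => (v^T *m Q *m v) 0 0).
Proof.
under eq_fun do rewrite mx_quadform_expand.
apply: continuous_sum => k; apply: continuous_sum => j Q.
apply: (@continuousM _ _ (cst (v j 0 * v k 0)) (fun Q : 'M[R]_D => Q j k)).
  exact: cst_continuous.
exact: coord_continuous.
Qed.

Lemma closed_psd_box D (M : R) : closed (psd_box M : set 'M[R]_D).
Proof.
have -> : psd_box M = [set Q : 'M[R]_D | forall i j, Q j i <= Q i j] `&`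
    [set Q | forall v : 'cV[R]_D, 0 <= (v^T *m Q *m v) 0 0] `&`
    [set Q | forall i j, `|Q i j| <= M].
  apply/seteqP; split=> Q /=.
    by move=> [[tQ qQ] QM]; do !split=> //; move=> i j; rewrite -{2}tQ mxE.
  move=> [[sQ qQ] QM]; do !split=> //; apply/matrixP => i j; rewrite mxE.
  by apply/le_anti; rewrite sQ sQ.
apply: closedI; first apply: closedI.
- apply: closed_forall => i; apply: closed_forall => j.
  by apply: closed_le_continuous; exact: coord_continuous.
- apply: closed_forall => v.
  by apply: closed_le_continuous; [exact: cst_continuous | exact: continuous_mx_quadform].
- apply: closed_forall => i; apply: closed_forall => j.
  apply: closed_le_continuous; last exact: cst_continuous.
  by move=> Q; apply: continuous_comp; [exact: coord_continuous | exact: norm_continuous].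
Qed.

Lemma vec_mx_continuous m n : continuous (@vec_mx R m n).
Proof.
move=> v B /nbhs_ballP [e e0 HB]; apply/nbhs_ballP; exists e => // y [_ H].
by apply: HB; split => // i j; rewrite !mxE; exact: H.
Qed.

Lemma compact_psd_box D (M : R) : compact (psd_box M : set 'M[R]_D).
Proof.
apply: (@subclosed_compact _ _
  (vec_mx @` [set v : 'rV[R]_(D * D) | forall k, `[- M, M]%classic (v ord0 k)])
  (@closed_psd_box D M)).
  apply: continuous_compact; first exact/continuous_subspaceT/vec_mx_continuous.
  by apply: (@rV_compact _ _ (fun=> `[- M, M]%classic)) => _; exact: segment_compact.
move=> Q [_ QM]; exists (mxvec Q); last exact: mxvecK.
by move=> k; case/mxvec_indexP: k => i j; rewrite mxvecE /= in_itv /= -ler_norml.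
Qed.

Lemma quadratic_lipschitz_entry_growth D D' (G : 'cV[R]_D -> 'M[R]_D') (Ce e : R) :
  (forall z z', normF (G z - G z') <=
     Ce * (1 + norm2 (z - z') * (norm2 z + norm2 z'))
     + e * (norm2 z ^+ 2 + norm2 z' ^+ 2)) ->
  forall z i j, `|G z i j| <= Ce + normF (G 0) + (Ce + e) * sqnorm2 z.
Proof.
move=> GL z i j; have := GL z 0.
rewrite subr0 norm2_0 !addr0 expr0n /= addr0 -expr2 norm2_sqr => Gz.
rewrite -[G z](subrK (G 0)) mxE; apply: le_trans (ler_normD _ _) _.
apply: le_trans (lerD (entry_le_normF _ i j) (entry_le_normF _ i j)) _.
rewrite [X in _ <= X](_ : _ = Ce * (1 + sqnorm2 z) + e * sqnorm2 z + normF (G 0)).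
  exact: lerD Gz (lexx _).
by ring.
Qed.

Lemma sum_sqnorm2_layer_inputs D C (w : nat -> R) :
  \sum_(c < C) sqnorm2 (\col_(i < D) w (c * D + i)%N) = \sum_(k < C * D) w k ^+ 2.
Proof.
elim: C => [|C IH]; first by rewrite mul0n !big_ord0.
rewrite big_ord_recr /= IH -!(big_mkord xpredT (fun k => w k ^+ 2)) mulSnr.
rewrite (big_cat_nat _ (leq_addr _ _)) //=; congr (_ + _).
rewrite /sqnorm2 -{2}[(C * D)%N]add0n big_addn addKn big_mkord.
by apply: eq_bigr => i _; rewrite mxE addnC.
Qed.

Lemma layer_map_psd_box D D' (G : 'cV[R]_D -> 'M[R]_D') (C : nat) (Q : 'M[R]_D)
    (w : nat -> R) (K B M t : R) :
  (0 < C)%N -> 0 <= B -> (forall z, sym_psd (G z)) ->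
  (forall z i j, `|G z i j| <= K + B * sqnorm2 z) -> psd_box M Q ->
  \sum_(k < C * D) w k ^+ 2 <= t * (C * D)%:R ->
  psd_box (K + B * (M * D%:R) * (t * D%:R)) (layer_map G C Q w).
Proof.
move=> C0 B0 Gpsd Ggrowth [_ QM] small; split.
  apply: sym_psdZ; first by rewrite invr_ge0.
  by apply: big_ind => //; [exact: sym_psd0 | exact: sym_psdD].
have MD0 := entry_bound_mul_dim_ge0 QM.
move=> i j; rewrite /layer_map mxE summxE normrM ger0_norm ?invr_ge0 //.
set Z := fun c : 'I_C => \col_(k < D) w (c * D + k)%N.
apply: (@le_trans _ _ (C%:R^-1 * \sum_(c < C) (K + B * (M * D%:R) * sqnorm2 (Z c)))).
  rewrite ler_wpM2l ?invr_ge0 //; apply: le_trans (ler_norm_sum _ _ _) _.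
  apply: ler_sum => c _; apply: le_trans (Ggrowth _ i j) _.
  by rewrite lerD2l -mulrA ler_wpM2l // sqnorm2_psd_sqrt_mul_le.
have C0' : (0 : R) < C%:R by rewrite ltr0n.
rewrite big_split /= sumr_const card_ord -mulr_sumr sum_sqnorm2_layer_inputs.
rewrite mulrDr -[K *+ C]mulr_natr mulrCA mulVf ?gt_eqF // mulr1 lerD2l mulrCA.
by rewrite ler_wpM2l ?(mulr_ge0 B0 MD0) // ler_pdivrMl // mulrCA -natrM.
Qed.

End PsdBox.

Lemma prob_in_ge0 (R : realType) (Dim : nat -> nat)
    (G : forall l, 'cV[R]_(Dim l) -> 'M[R]_(Dim l.+1)) (C : nat -> nat)
    (S : forall l, set 'M[R]_(Dim l)) k l (Q : 'M[R]_(Dim l)) :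
  (0 <= prob_in G C S k Q)%E.
Proof.
elim: k l Q => [|k IH] l Q /=; first exact: lee01.
by apply: gauss_int_ge0 => w; rewrite mule_ge0 // lee_fin indicE ler0n.
Qed.

Section ChainBoxes.
Variables (R : realType) (L : nat) (Dim : nat -> nat).
Variable G : forall l, 'cV[R]_(Dim l) -> 'M[R]_(Dim l.+1).
Arguments G : clear implicits.
Variables (K B t : nat -> R) (K1 : 'M[R]_(Dim 1%N)).
Hypothesis G_psd : forall l, (1 <= l <= L)%N -> forall z, sym_psd (G l z).
Hypothesis G_growth : forall l, (1 <= l <= L)%N ->
  forall z i j, `|G l z i j| <= K l + B l * sqnorm2 z.
Hypothesis B_ge0 : forall l, (1 <= l <= L)%N -> 0 <= B l.
Hypothesis K1_psd : sym_psd K1.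

(* The entrywise bound that layer_map_psd_box propagates from layer l' to l'.+1. *)
Fixpoint box_radius (l : nat) : R :=
  match l with
  | 0 | 1 => normF K1
  | l'.+1 => K l' + B l' * (box_radius l' * (Dim l')%:R) * (t l' * (Dim l')%:R)
  end.

Definition chain_box l : set 'M[R]_(Dim l) := psd_box (box_radius l).
Arguments chain_box : clear implicits.

Lemma chain_box1 : chain_box 1 K1.
Proof. by split=> // i j; exact: entry_le_normF. Qed.

Lemma layer_map_chain_box l C Q (w : nat -> R) :
  (1 <= l <= L)%N -> (0 < C)%N -> chain_box l Q ->
  \sum_(k < C * Dim l) w k ^+ 2 <= t l * (C * Dim l)%:R ->
  chain_box l.+1 (layer_map (G l) C Q w).
Proof.
move=> lL C0 Ql small; rewrite /chain_box.
have -> : box_radius l.+1 =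
    K l + B l * (box_radius l * (Dim l)%:R) * (t l * (Dim l)%:R).
  by case/andP: lL; case: l Q Ql small.
exact: layer_map_psd_box (B_ge0 lL) (G_psd lL) (G_growth lL) Ql small.
Qed.

Lemma prob_in_chain_box_ge (C : nat -> nat) :
  (forall l, (1 <= l <= L)%N -> (0 < C l)%N) ->
  forall k l Q, (1 <= l)%N -> (l + k <= L.+1)%N -> chain_box l Q ->
  ((1 - \sum_(l <= j < l + k) gauss_sqnorm_tail (t j) (C j * Dim j))%:E <=
   prob_in G C chain_box k Q)%E.
Proof.
move=> C_gt0; elim=> [|k IH] l Q l1 lk Ql /=.
  by rewrite addn0 big_geq // subr0.
have lL : (1 <= l <= L)%N by lia.
rewrite big_ltn; last lia.
set rest := (\sum_(l.+1 <= j < l + k.+1) _)%R.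
rewrite (_ : (1 - _)%R = 1 - rest - gauss_sqnorm_tail (t l) (C l * Dim l))%R;
  last by ring.
apply: gauss_int_chernoff => [|w|w small].
- by rewrite lerBlDr lerDl sumr_ge0 // => j _; exact: gauss_sqnorm_tail_ge0.
- by rewrite mule_ge0 ?prob_in_ge0 // lee_fin indicE ler0n.
have Ql' := layer_map_chain_box lL (C_gt0 _ lL) Ql small.
rewrite indicE mem_set // mul1e /rest -addSnnS.
by apply: IH => //; lia.
Qed.

Lemma chain_exit_prob_le (Cn : nat -> nat -> nat) n :
  (forall l, (1 <= l <= L)%N -> (0 < Cn l n)%N) ->
  (chain_exit_prob G Cn L K1 chain_box n <=
   (\sum_(1 <= j < L.+1) gauss_sqnorm_tail (t j) (Cn j n * Dim j))%:E)%E.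
Proof.
move=> Cn_gt0; have := prob_in_chain_box_ge Cn_gt0 (leqnn 1) (leqnn _) chain_box1.
move=> /(leeB (lexx 1%E)) /le_trans; apply.
by rewrite -EFinB lee_fin subKr.
Qed.

End ChainBoxes.

Section Asymptotics.
Variable R : realType.

Lemma expr2n_le_expR (N : nat) : (2 : R) ^+ N <= expR N%:R.
Proof.
rewrite -[N%:R]mulr1 expRM_natl; apply: lerXn2r; rewrite ?nnegrE ?expR_ge0 //.
by have := expR_ge1Dx (1 : R); rewrite (_ : 1 + 1 = 2 :> R).
Qed.

Lemma gauss_sqnorm_tail_le_expR (r : R) N :
  gauss_sqnorm_tail (8 / 3 * (r + 1)) N <= expR (- (r * N%:R)).
Proof.
apply: le_trans (ler_wpM2l (expR_ge0 _) (expr2n_le_expR N)) _.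
by rewrite -expRD ler_expR; lra.
Qed.

Lemma cvg_ratio_eventually_ge (f : nat -> nat) (a : R) : 0 < a ->
  (fun n => (f n)%:R / n%:R) @ \oo --> a ->
  \forall n \near \oo, a / 2 * n%:R <= (f n)%:R.
Proof.
move=> a0 fa; have half_lt : a / 2 < a by rewrite ltr_pdivrMr // ltr_pMr // ltr1n.
near=> n.
have n_gt0 : (0 : R) < n%:R by rewrite ltr0n; near: n; exact: nbhs_infty_gt.
rewrite -ler_pdivlMr //; apply/ltW; near: n; exact: cvgr_gt fa _ half_lt.
Unshelve. all: by end_near.
Qed.

Lemma gauss_sqnorm_tail_eventually_le (Cn : nat -> nat) (D : nat) (alpha a : R) :
  0 <= a -> (0 < D)%N -> 0 < alpha -> (fun n => (Cn n)%:R / n%:R) @ \oo --> alpha ->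
  \forall n \near \oo,
    gauss_sqnorm_tail (8 / 3 * (2 * a / alpha + 1)) (Cn n * D) <= expR (- a * n%:R).
Proof.
move=> a0 D_gt0 alpha_gt0 Cn_cvg; near=> n.
have Cn_ge : alpha / 2 * n%:R <= (Cn n)%:R.
  by near: n; exact: cvg_ratio_eventually_ge alpha_gt0 Cn_cvg.
apply: le_trans (gauss_sqnorm_tail_le_expR _ _) _; rewrite ler_expR mulNr lerN2.
have -> : a * n%:R = 2 * a / alpha * (alpha / 2 * n%:R) by field; rewrite gt_eqF.
apply: ler_wpM2l; first exact: divr_ge0 (mulr_ge0 _ a0) (ltW alpha_gt0).
by rewrite (le_trans Cn_ge) // ler_nat leq_pmulr.
Unshelve. all: by end_near.
Qed.

Lemma sum_tails_eventually_le (L : nat) (Dim : nat -> nat) (Cn : nat -> nat -> nat)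
    (alpha : nat -> R) (a : R) :
  0 <= a -> (forall l, (1 <= l <= L)%N -> (0 < Dim l)%N) ->
  (forall l, (1 <= l <= L)%N ->
     0 < alpha l /\ (fun n => (Cn l n)%:R / n%:R) @ \oo --> alpha l) ->
  \forall n \near \oo, \sum_(1 <= j < L.+1)
     gauss_sqnorm_tail (8 / 3 * (2 * a / alpha j + 1)) (Cn j n * Dim j) <=
     L%:R * expR (- a * n%:R).
Proof.
move=> a0 Dim_gt0 growth.
have : \forall n \near \oo, forall i : 'I_L.+1, (1 <= i)%N ->
    gauss_sqnorm_tail (8 / 3 * (2 * a / alpha i + 1)) (Cn i n * Dim i) <=
    expR (- a * n%:R).
  apply: filter_forall => i; have [i0|i_gt0] := posnP i.
    by apply: nearW => n; rewrite i0.
  have iL : (1 <= i <= L)%N by rewrite i_gt0 -ltnS ltn_ord.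
  have [alpha_gt0 Cn_cvg] := growth i iL.
  near=> n => _; near: n.
  exact: gauss_sqnorm_tail_eventually_le a0 (Dim_gt0 i iL) alpha_gt0 Cn_cvg.
apply: filterS => n tails_le.
apply: le_trans (ler_sum_nat (G := fun=> expR (- a * n%:R)) _) _.
  by move=> j /andP[j1 jL]; exact: (tails_le (Ordinal jL) j1).
by rewrite sumr_const_nat subSS subn0 mulr_natl.
Unshelve. all: by end_near.
Qed.

Local Open Scope ereal_scope.

Lemma limn_esup_le_near (u : nat -> \bar R) (b : \bar R) :
  (\forall n \near \oo, u n <= b) -> limn_esup u <= b.
Proof.
move=> [N _ uN]; rewrite /limn_esup /limf_esup.
apply: (@le_trans _ _ (ereal_sup (u @` [set n | (N <= n)%N]))).
  by apply: ereal_inf_lbound; exists [set n | (N <= n)%N] => //; exists N.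
by apply: ge_ereal_sup => _ [n Nn <-]; exact: uN.
Qed.

Lemma lne_le_ln (x : \bar R) (y : R) : (0 < y)%R -> x <= y%:E -> lne x <= (ln y)%:E.
Proof.
move=> y0; case: x => [r| |] //= ry; last exact: leNye.
case: ifPn => [_|]; first exact: leNye.
by rewrite -ltNge => r0; rewrite lee_fin ler_ln ?posrE // -lee_fin.
Qed.

Lemma limn_esup_scaled_lne_le (x : nat -> \bar R) (c a : R) : (0 < c)%R ->
  (\forall n \near \oo, x n <= (c * expR (- (a + 1) * n%:R))%:E) ->
  limn_esup (fun n => (n%:R^-1)%:E * lne (x n)) <= (- a)%:E.
Proof.
move=> c0 x_le; apply: limn_esup_le_near; near=> n.
have n_gt0 : (0 < n%:R :> R)%R by rewrite ltr0n; near: n; exact: nbhs_infty_gt.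
have lnc : (ln c <= n%:R)%R.
  have := @le_ln1Dx R (c - 1); rewrite subrKC => /(_ _)/le_trans; apply.
    by rewrite ltrBrDl subrr.
  have : (c <= n%:R)%R by near: n; exact: nbhs_infty_ger.
  lra.
have cexp_gt0 : (0 < c * expR (- (a + 1) * n%:R))%R by rewrite mulr_gt0 ?expR_gt0.
apply: le_trans (lee_wpmul2l _ (lne_le_ln cexp_gt0 _)) _.
- by rewrite lee_fin invr_ge0 ler0n.
- by near: n.
rewrite -EFinM lee_fin lnM ?posrE ?expR_gt0 // expRK ler_pdivrMl //.
lra.
Unshelve. all: by end_near.
Qed.

End Asymptotics.

Unset Implicit Arguments.
Set Strict Implicit.

Theorem mainTheorem19 (R : realType) (L : nat) (Dim : nat -> nat)
  (G : forall l, 'cV[R]_(Dim l) -> 'M[R]_(Dim l.+1))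
  (K1 : 'M[R]_(Dim 1%N)) (Cn : nat -> nat -> nat) (alpha : nat -> R) :
  (1 <= L)%N ->
  (forall l, (1 <= l <= L.+1)%N -> (0 < Dim l)%N) ->
  (forall l, (1 <= l <= L)%N -> forall z, sym_psd (G l z)) ->
  sym_psd K1 ->
  (forall l n, (1 <= l <= L)%N -> (0 < Cn l n)%N) ->
  (* channel growth condition *)
  (forall l, (1 <= l <= L)%N ->
     0 < alpha l /\ (fun n : nat => ((Cn l n)%:R / n%:R : R)) @ \oo --> alpha l) ->
  (* asymptotic quadratic-Lipschitz condition *)
  (forall l, (1 <= l <= L)%N -> continuous (G l)) ->
  (forall l, (1 <= l <= L)%N -> forall e : R, 0 < e ->
     exists Ce : R, 0 < Ce /\
       forall z z' : 'cV[R]_(Dim l),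
         normF (G l z - G l z') <=
           Ce * (1 + norm2 (z - z') * (norm2 z + norm2 z'))
           + e * (norm2 z ^+ 2 + norm2 z' ^+ 2)) ->
  forall eps : R, 0 < eps ->
  exists S : forall l, set 'M[R]_(Dim l),
    (forall l, (2 <= l <= L.+1)%N ->
       compact (S l) /\ S l `<=` [set Q | sym_psd Q]) /\
    (limn_esup (fun n : nat =>
        ((n%:R)^-1)%:E * lne (chain_exit_prob G Cn L K1 S n)) <= - eps%:E)%E.
Proof.
move=> L_gt0 Dim_gt0 G_psd K1_psd Cn_gt0 growth _ G_lip eps eps_gt0.
have /choice[Ce Ce_lip] : forall l, exists Ce : R, (1 <= l <= L)%N -> 0 <= Ce /\
    forall z z', normF (G l z - G l z') <=
      Ce * (1 + norm2 (z - z') * (norm2 z + norm2 z'))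
      + 1 * (norm2 z ^+ 2 + norm2 z' ^+ 2).
  move=> l; have [lL|] := boolP (1 <= l <= L)%N; last by exists 0.
  by have [c [c_gt0 c_lip]] := G_lip l lL 1 ltr01; exists c => _; split; first exact: ltW.
pose t l := 8 / 3 * (2 * (eps + 1) / alpha l + 1).
have B_ge0 l : (1 <= l <= L)%N -> 0 <= Ce l + 1 by move=> /Ce_lip[? _]; rewrite addr_ge0.
have G_growth l (lL : (1 <= l <= L)%N) :=
  quadratic_lipschitz_entry_growth (Ce_lip l lL).2.
exists (chain_box (fun l => Ce l + normF (G l 0)) (fun l => Ce l + 1) t K1); split.
  by move=> l _; split; [exact: compact_psd_box | move=> Q []].
apply: (limn_esup_scaled_lne_le (c := L%:R)); first by rewrite ltr0n.
near=> n.
apply: le_trans (chain_exit_prob_le t G_psd G_growth B_ge0 K1_psd (Cn_gt0 ^~ n)) _.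
rewrite lee_fin; near: n; apply: sum_tails_eventually_le.
- by rewrite addr_ge0 // ltW.
- by move=> l /andP[l1 lL]; rewrite Dim_gt0 // l1 ltnW.
- exact: growth.
Unshelve. all: by end_near.
Qed.
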